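(* Let $n\ge 3$, let $F$ be a set of edges of $Q_n$, and let $B$ be a set of edges of $Q_n$ not in $F$ such that every Hamiltonian cycle of $Q_n-F$ contains every edge of $B$. Fix a dimension $i$, and let $f_i^e$ (resp. $f_i^o$) be the number of even (resp. odd) crossing edges of dimension $i$ that lie in $F$, and $b_i^e$ (resp. $b_i^o$) the number of even (resp. odd) crossing edges of dimension $i$ that lie in $B$. Then: (1) if $f_i^e=2^{n-2}$ or $f_i^o=2^{n-2}$, then $Q_n-F$ has no Hamiltonian cycle; (2) if $f_i^e+b_i^o>2^{n-2}$ or $f_i^o+b_i^e>2^{n-2}$, then $Q_n-F$ has no Hamiltonian cycle; (3) if $f_i^e+b_i^o=2^{n-2}$, then every Hamiltonian cycle of $Q_n-F$ contains every even crossing edge of dimension $i$ not in $F$, and every odd crossing edge of dimension $i$ contained in a Hamiltonian cycle of $Q_n-F$ belongs to $B$; (4) if $f_i^o+b_i^e=2^{n-2}$, then every Hamiltonian cycle of $Q_n-F$ contains every odd crossing edge of dimension $i$ not in $F$, and every even crossing edge of dimension $i$ contained in a Hamiltonian cycle of $Q_n-F$ belongs to $B$; (5) if $f_i^e=2^{n-2}-1$ (resp. $f_i^o=2^{n-2}-1$), then the unique even (resp. odd) crossing edge of dimension $i$ not in $F$ belongs to every Hamiltonian cycle of $Q_n-F$.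
   Context: $Q_n$ is the $n$-dimensional hypercube on the binary strings $x=x_{n-1}\dots x_0$, two strings adjacent iff they differ in exactly one bit; $x^{(i)}$ denotes $x$ with bit $i$ flipped. The parity of a vertex is the number of ones in its label modulo 2. $F$ is a set of ''faulty'' edges and $Q_n-F$ is the graph on all vertices of $Q_n$ with the edges of $Q_n$ not in $F$. For a dimension $i$, let $Q^L=\{x:x_i=0\}$; the crossing edges of dimension $i$ are the $2^{n-1}$ edges $(u,u^{(i)})$ with $u\in Q^L$; such an edge is even if $u$ has parity 0 and odd if $u$ has parity 1 (so there are $2^{n-2}$ even and $2^{n-2}$ odd crossing edges). *)

From mathcomp Require Import all_boot.
Set Implicit Arguments. Unset Strict Implicit. Unset Printing Implicit Defensive.

Definition vert (n : nat) := {ffun 'I_n -> bool}.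

Definition flip n (x : vert n) (i : 'I_n) : vert n :=
  [ffun j => if j == i then ~~ x j else x j].

Definition parity n (x : vert n) : bool := odd #|[set j | x j]|.

(* an (undirected) edge is the 2-element set of its endpoints *)
Definition Qedges n : {set {set vert n}} :=
  [set [set x; flip x i] | x : vert n, i : 'I_n].

Definition adjF n (F : {set {set vert n}}) (x y : vert n) : bool :=
  [exists i, y == flip x i] && ([set x; y] \notin F).

(* Hamiltonian cycle of Q_n - F, given as the cyclic sequence of its vertices *)
Definition HamCycle n (F : {set {set vert n}}) (c : seq (vert n)) : Prop :=
  [/\ uniq c, forall x : vert n, x \in c & cycle (adjF F) c].

Definition cycle_edges n (c : seq (vert n)) : {set {set vert n}} :=
  [set [set x; next c x] | x in c].

(* crossing edges of dimension i, even / odd according to the endpoint with x_i = 0 *)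
Definition even_cross n (i : 'I_n) : {set {set vert n}} :=
  [set [set u; flip u i] | u : vert n & (u i == false) && ~~ parity u].
Definition odd_cross n (i : 'I_n) : {set {set vert n}} :=
  [set [set u; flip u i] | u : vert n & (u i == false) && parity u].

Definition hamiltonian n (F : {set {set vert n}}) : Prop :=
  exists c, HamCycle F c.

From mathcomp Require Import all_boot zify.
Set Implicit Arguments. Unset Strict Implicit. Unset Printing Implicit Defensive.

(* Let c be a Hamiltonian cycle of Q_n - F and split Q^L = {x_i = 0} into its
   even and odd vertices, two classes of size 2^(n-2).  Along c, the successor
   of a vertex of Q^L is either its crossing neighbour or a vertex of the other
   class; as the successor map is a bijection, the vertices of one class whose
   successor crosses are as many as the vertices of the other class whose
   predecessor crosses.  Hence c uses as many even as odd crossing edges of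
   dimension i, and at least one, since it also visits {x_i = 1}.  The even
   crossing edges of c avoid F and its odd ones include those of B, so the five
   claims are counting consequences. *)

Section Flip.
Variable n : nat.
Implicit Types (x : vert n) (j k : 'I_n).

Lemma flipE x j k : flip x j k = if k == j then ~~ x k else x k.
Proof. by rewrite ffunE. Qed.

Lemma flip_at x j : flip x j j = ~~ x j.
Proof. by rewrite flipE eqxx. Qed.

Lemma flip_off x j k : k != j -> flip x j k = x k.
Proof. by rewrite flipE => /negbTE ->. Qed.

Lemma flipK j : involutive (fun x : vert n => flip x j).
Proof. by move=> x; apply/ffunP => k; rewrite !flipE; case: eqP; rewrite ?negbK. Qed.

Lemma flip_inj j : injective (fun x : vert n => flip x j).
Proof. exact: inv_inj (@flipK j). Qed.

Lemma flip_neq x j : flip x j != x.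
Proof. by apply/eqP => /ffunP/(_ j); rewrite flip_at; case: (x j). Qed.

Lemma eq_flip x j k : (flip x j == flip x k) = (j == k).
Proof.
apply/eqP/eqP => [/ffunP/(_ j)|-> //].
by rewrite flip_at flipE eq_sym; case: eqP => // _; case: (x j).
Qed.

Lemma parity_flip x j : parity (flip x j) = ~~ parity x.
Proof.
rewrite /parity; case xj: (x j).
- have -> : [set k | flip x j k] = [set k | x k] :\ j.
    by apply/setP => k; rewrite !inE flipE; case: eqP => [->|]; rewrite ?xj.
  by rewrite [#|[set k | x k]|](cardsD1 j) inE xj /= negbK.
- have -> : [set k | flip x j k] = j |: [set k | x k].
    by apply/setP => k; rewrite !inE flipE; case: eqP => [->|]; rewrite ?xj.
  by rewrite cardsU1 inE xj.
Qed.

End Flip.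

Section CycleSeq.
Variables (T : eqType) (c : seq T).
Hypothesis c_uniq : uniq c.

Lemma next_next_neq x : 2 < size c -> x \in c -> next c (next c x) != x.
Proof.
move=> c_big /rot_to[k s def_c].
have : uniq (x :: s) by rewrite -def_c rot_uniq.
have : 2 < size (x :: s) by rewrite -def_c size_rot.
rewrite -!(next_rot k c_uniq) def_c.
case: s {def_c} => [|y [|z t]] //= _; rewrite !inE !negb_or eqxx.
case/and4P => /and3P[/negbTE yx /negbTE zx _] _ _ _.
by rewrite (eq_sym y) yx eqxx eq_sym zx.
Qed.

Lemma next_neq_prev x : 2 < size c -> x \in c -> next c x != prev c x.
Proof.
move=> c_big cx; apply: contraNneq (next_next_neq c_big cx) => ->.
by rewrite next_prev.
Qed.

Lemma exists_next_change (P : pred T) x y :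
  x \in c -> y \in c -> P x != P y -> exists2 z, z \in c & P (next c z) != P z.
Proof.
move=> cx cy Pxy.
have [/hasP // | /hasPn no_change] := boolP (has (fun z => P (next c z) != P z) c).
have P_tr : transitive [rel a b | P a == P b] by move=> a b d /= /eqP-> /eqP->.
have : cycle [rel a b | P a == P b] c.
  by apply: cycle_from_next => // z /no_change; rewrite negbK eq_sym.
by rewrite cycle_all2rel // => /allrelP/(_ x y cx cy)/= Pxy'; rewrite Pxy' in Pxy.
Qed.

End CycleSeq.

Lemma cards_sep (T : finType) (A : {set T}) (P : pred T) :
  #|[set x in A | P x]| + #|[set x in A | ~~ P x]| = #|A|.
Proof.
rewrite -(cardsID [set x | P x] A) -setIdE setDE.
by apply/eqP; rewrite eqn_add2l; apply/eqP/eq_card => x; rewrite !inE.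
Qed.

Lemma card_next_notin (T : finType) (f g : T -> T) (A B : {set T}) :
  cancel f g -> cancel g f -> #|A| = #|B| ->
  #|[set x in A | f x \notin B]| = #|[set y in B | g y \notin A]|.
Proof.
move=> fK gK eqAB.
have inE_f : f @: [set x in A | f x \in B] = [set y in B | g y \in A].
  apply/setP => y; rewrite inE; apply/imsetP/andP => [[x] | [By Agy]].
    by rewrite inE => /andP[Ax Bfx] ->; rewrite fK.
  by exists (g y); rewrite ?inE gK ?Agy ?By.
have := cards_sep A (fun x => f x \in B); have := cards_sep B (fun y => g y \in A).
have := card_imset [set x in A | f x \in B] (can_inj fK).
by rewrite inE_f; lia.
Qed.

Section CrossingEdges.
Variables (n : nat) (i : 'I_n).
Implicit Types (u v x : vert n) (j : 'I_n) (p : bool).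

Definition cross_edge u : {set vert n} := [set u; flip u i].
Definition left_half := [set u : vert n | u i == false].
Definition left_parity p := [set u in left_half | parity u == p].
Definition cross_edges p := cross_edge @: left_parity p.
Definition fault_free (F : {set {set vert n}}) p :=
  [set u in left_parity p | cross_edge u \notin F].

Lemma even_cross_edges : even_cross i = cross_edges false.
Proof.
apply/setP => e; apply/imsetP/imsetP => -[u pu ->]; exists u => //;
  by move: pu; rewrite !inE; case: parity; rewrite ?andbF ?andbT.
Qed.

Lemma odd_cross_edges : odd_cross i = cross_edges true.
Proof.
apply/setP => e; apply/imsetP/imsetP => -[u pu ->]; exists u => //;
  by move: pu; rewrite !inE; case: parity; rewrite ?andbF ?andbT.
Qed.

Lemma cross_edge_inj : {in left_half &, injective cross_edge}.
Proof.
move=> u v; rewrite !inE => /eqP ui /eqP vi uv.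
have : u \in cross_edge v by rewrite -uv !inE eqxx.
by rewrite !inE => /orP[/eqP // | /eqP u_flip]; move: ui; rewrite u_flip flip_at vi.
Qed.

Lemma card_setI_cross_edges (S : {set {set vert n}}) p :
  #|S :&: cross_edges p| = #|[set u in left_parity p | cross_edge u \in S]|.
Proof.
rewrite -(card_in_imset (f := cross_edge)); last first.
  by move=> u v /setIdP[/setIdP[hu _] _] /setIdP[/setIdP[hv _] _]; apply: cross_edge_inj.
apply: eq_card => e; rewrite inE; apply/andP/imsetP => [[Se /imsetP[u pu eu]] | [u]].
  by exists u; rewrite // inE pu -eu.
by rewrite inE => /andP[pu Su] ->; split; last exact: imset_f.
Qed.

Lemma flip_left_parity u j p :
  u \in left_parity p -> (flip u j \in left_parity (~~ p)) = (j != i).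
Proof.
rewrite !inE => /andP[/eqP ui /eqP <-].
have [-> | ji] := eqVneq j i; first by rewrite flip_at ui.
by rewrite flip_off 1?eq_sym // ui parity_flip !eqxx.
Qed.

Hypothesis n_gt1 : 1 < n.

Lemma exists_other_dim : exists j : 'I_n, j != i.
Proof.
have [<-|] := eqVneq (Ordinal (ltnW n_gt1)) i; last by exists (Ordinal (ltnW n_gt1)).
by exists (Ordinal n_gt1).
Qed.

Lemma card_left_parity_le p : #|left_parity p| <= #|left_parity (~~ p)|.
Proof.
have [j ji] := exists_other_dim.
rewrite -(card_imset _ (@flip_inj n j)); apply/subset_leq_card/subsetP => v /imsetP[u pu ->].
by rewrite flip_left_parity.
Qed.

Lemma card_left_half : #|left_half|.*2 = 2 ^ n.
Proof.
have -> : 2 ^ n = #|vert n| by rewrite card_ffun card_bool card_ord.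
rewrite -(cardsC left_half) -addnn.
have -> : ~: left_half = (fun u => flip u i) @: left_half.
  apply/setP => v; rewrite !inE; apply/idP/imsetP => [vi | [u]].
    by exists (flip v i); rewrite ?flipK // inE flip_at; case: (v i) vi.
  by rewrite inE => /eqP ui ->; rewrite flip_at ui.
by rewrite card_imset //; apply: flip_inj.
Qed.

Lemma card_left_parity p : #|left_parity p| = 2 ^ (n - 2).
Proof.
have split_half : #|left_parity true| + #|left_parity false| = #|left_half|.
  rewrite -(cardsID [set u | parity u] left_half); congr (_ + _); apply: eq_card => u;
  by rewrite !inE; case: parity; rewrite ?andbT ?andbF.
have := card_left_parity_le true; have := card_left_parity_le false.
have : 2 ^ n = 4 * 2 ^ (n - 2) by rewrite -{1}(subnK n_gt1) expnD mulnC.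
by rewrite -card_left_half -addnn -split_half /=; case: p; lia.
Qed.

Section HamiltonianCycle.
Variables (F : {set {set vert n}}) (c : seq (vert n)).
Hypothesis c_ham : HamCycle F c.

Let c_uniq : uniq c. Proof. by case: c_ham. Qed.
Let mem_c x : x \in c. Proof. by case: c_ham. Qed.
Let c_cycle : cycle (adjF F) c. Proof. by case: c_ham. Qed.

Lemma next_flip x : exists j, next c x = flip x j.
Proof. by have /andP[/existsP[j /eqP ->] _] := next_cycle c_cycle (mem_c x); exists j. Qed.

Lemma prev_flip x : exists j, prev c x = flip x j.
Proof.
have /andP[/existsP[j /eqP xE] _] := prev_cycle c_cycle (mem_c x).
by exists j; rewrite [in RHS]xE flipK.
Qed.

Lemma cycle_edges_notin e : e \in cycle_edges c -> e \notin F.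
Proof. by case/imsetP => x _ ->; have /andP[] := next_cycle c_cycle (mem_c x). Qed.

Lemma size_ham_cycle : 2 < size c.
Proof.
have <- : #|vert n| = size c.
  by rewrite -(card_uniqP c_uniq); apply: eq_card => x; rewrite mem_c.
rewrite card_ffun card_bool card_ord -(subnK n_gt1) expnD; have := expn_gt0 2 (n - 2); lia.
Qed.

Lemma mem_cycle_edges u v :
  ([set u; v] \in cycle_edges c) = (next c u == v) || (prev c u == v).
Proof.
apply/imsetP/orP => [[x _ uvE] | [/eqP <- | /eqP <-]]; last 2 first.
- by exists u.
- by exists (prev c u); rewrite // next_prev // setUC.
have next_x : next c x != x by have [j ->] := next_flip x; apply: flip_neq.
have /set2P[nx_u | nx_v] : next c x \in [set u; v] by rewrite uvE set22.
  have /set2P[xu | xv] : x \in [set u; v] by rewrite uvE set21.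
    by rewrite nx_u xu eqxx in next_x.
  by right; rewrite -nx_u -xv prev_next.
have /set2P[xu | xv] : x \in [set u; v] by rewrite uvE set21.
  by left; rewrite -xu nx_v.
by rewrite nx_v xv eqxx in next_x.
Qed.

Definition crossed p := [set u in left_parity p | cross_edge u \in cycle_edges c].
Definition crossed_next p := [set u in left_parity p | next c u == flip u i].
Definition crossed_prev p := [set u in left_parity p | prev c u == flip u i].

Lemma card_crossed p : #|crossed p| = #|crossed_next p| + #|crossed_prev p|.
Proof.
have -> : crossed p = crossed_next p :|: crossed_prev p.
  by apply/setP => u; rewrite !inE /cross_edge mem_cycle_edges andb_orr.
rewrite cardsU (_ : _ :&: _ = set0) ?cards0 ?subn0 //.
apply/setP => u; rewrite !inE; apply/negbTE; rewrite andbACA andbb.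
by apply: contraNN (next_neq_prev c_uniq size_ham_cycle (mem_c u)) => /and3P[_ /eqP-> /eqP->].
Qed.

Lemma card_crossed_next p : #|crossed_next p| = #|crossed_prev (~~ p)|.
Proof.
have eq_card_parity : #|left_parity p| = #|left_parity (~~ p)| by rewrite !card_left_parity.
have -> : crossed_next p = [set u in left_parity p | next c u \notin left_parity (~~ p)].
  apply: eq_finset => u; case pu: (u \in left_parity p) => //=.
  by have [j ->] := next_flip u; rewrite flip_left_parity // eq_flip negbK.
have -> : crossed_prev (~~ p) = [set u in left_parity (~~ p) | prev c u \notin left_parity p].
  apply: eq_finset => u; case pu: (u \in left_parity (~~ p)) => //=.
  have [j ->] := prev_flip u; rewrite -[in left_parity p](negbK p) flip_left_parity //.
  by rewrite eq_flip negbK.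
exact: card_next_notin (prev_next c_uniq) (next_prev c_uniq) eq_card_parity.
Qed.

Lemma card_crossed_parity p : #|crossed p| = #|crossed (~~ p)|.
Proof.
by rewrite !card_crossed (card_crossed_next p) (card_crossed_next (~~ p)) negbK addnC.
Qed.

Lemma exists_crossed : exists u, u \in crossed (parity u).
Proof.
pose u0 : vert n := [ffun => false].
have [|z _ zi] := exists_next_change c_uniq (P := fun x : vert n => x i)
                    (mem_c u0) (mem_c (flip u0 i)).
  by rewrite flip_at ffunE.
have [j zj] := next_flip z.
have ji : j = i by apply/eqP; apply: contraNT zi => ij; rewrite zj flip_off 1?eq_sym.
have zE : [set z; next c z] \in cycle_edges c by apply: imset_f.
rewrite zj ji in zi zE; case zi0 : (z i).
- by exists (flip z i); rewrite !inE flip_at zi0 eqxx /cross_edge flipK setUC.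
- by exists z; rewrite !inE zi0 !eqxx /cross_edge.
Qed.

Lemma crossed_gt0 p : 0 < #|crossed p|.
Proof.
have [u pu] := exists_crossed.
have : 0 < #|crossed (parity u)| by apply/card_gt0P; exists u.
by case: p; case: (parity u) => //; rewrite card_crossed_parity.
Qed.

Lemma crossed_sub_fault_free p : crossed p \subset fault_free F p.
Proof. by apply/subsetP => u /setIdP[pu uc]; rewrite inE pu cycle_edges_notin. Qed.

End HamiltonianCycle.

Section Faults.
Variables (F B : {set {set vert n}}).
Hypothesis B_ham : forall c, HamCycle F c -> B \subset cycle_edges c.

Lemma card_fault_free p : #|F :&: cross_edges p| + #|fault_free F p| = 2 ^ (n - 2).
Proof. by rewrite card_setI_cross_edges -(card_left_parity p); apply: cards_sep. Qed.

Lemma card_crossed_le c p : HamCycle F c -> #|crossed c p| <= #|fault_free F p|.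
Proof. by move=> c_ham; apply/subset_leq_card/crossed_sub_fault_free. Qed.

Lemma B_sub_crossed c p :
  HamCycle F c -> [set u in left_parity p | cross_edge u \in B] \subset crossed c p.
Proof.
move=> c_ham; apply/subsetP => u /setIdP[pu uB].
by rewrite inE pu (subsetP (B_ham c_ham)).
Qed.

Lemma card_B_le c p : HamCycle F c -> #|B :&: cross_edges p| <= #|crossed c p|.
Proof.
by move=> c_ham; rewrite card_setI_cross_edges; apply/subset_leq_card/B_sub_crossed.
Qed.

Lemma fault_free_sub_cycle_edges c p :
  HamCycle F c -> #|fault_free F p| <= #|crossed c p| ->
  cross_edges p :\: F \subset cycle_edges c.
Proof.
move=> c_ham le_free; have crossedE : crossed c p = fault_free F p.
  by apply/eqP; rewrite eqEcard le_free andbT; apply: crossed_sub_fault_free.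
apply/subsetP => _ /setDP[/imsetP[u pu ->] uF].
have : u \in fault_free F p by rewrite inE pu uF.
by rewrite -crossedE => /setIdP[].
Qed.

Lemma no_ham_full p : #|F :&: cross_edges p| = 2 ^ (n - 2) -> ~ hamiltonian F.
Proof.
move=> fullF [c c_ham]; have := crossed_gt0 c_ham p; have := card_crossed_le p c_ham.
by have := card_fault_free p; lia.
Qed.

Lemma no_ham_overfull p :
  2 ^ (n - 2) < #|F :&: cross_edges p| + #|B :&: cross_edges (~~ p)| -> ~ hamiltonian F.
Proof.
move=> over [c c_ham]; have := card_crossed_le p c_ham; have := card_B_le (~~ p) c_ham.
have := card_fault_free p.
by rewrite -(card_crossed_parity c_ham); lia.
Qed.

Lemma tight_cross_edges p :
  #|F :&: cross_edges p| + #|B :&: cross_edges (~~ p)| = 2 ^ (n - 2) ->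
  (forall c, HamCycle F c -> cross_edges p :\: F \subset cycle_edges c) /\
  (forall e, e \in cross_edges (~~ p) ->
     (exists c, HamCycle F c /\ e \in cycle_edges c) -> e \in B).
Proof.
move=> tight; split => [c c_ham | _ /imsetP[u qu ->] [c [c_ham uc]]].
  apply: (fault_free_sub_cycle_edges c_ham); have := card_B_le (~~ p) c_ham.
  by have := card_fault_free p; rewrite -(card_crossed_parity c_ham); lia.
have BE : [set u in left_parity (~~ p) | cross_edge u \in B] = crossed c (~~ p).
  apply/eqP; rewrite eqEcard B_sub_crossed //= -(card_crossed_parity c_ham).
  rewrite -(card_setI_cross_edges B).
  by have := card_crossed_le p c_ham; have := card_fault_free p; lia.
have : u \in crossed c (~~ p) by rewrite inE qu.
by rewrite -BE => /setIdP[].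
Qed.

Lemma almost_full p : #|F :&: cross_edges p| = 2 ^ (n - 2) - 1 ->
  forall e, e \in cross_edges p :\: F -> forall c, HamCycle F c -> e \in cycle_edges c.
Proof.
move=> almost e eF c c_ham; apply: (subsetP (fault_free_sub_cycle_edges c_ham _) _ eF).
have := crossed_gt0 c_ham p; have := expn_gt0 2 (n - 2).
by have := card_fault_free p; lia.
Qed.

End Faults.
End CrossingEdges.

Theorem lemma6 (n : nat) (hn : 3 <= n) (F B : {set {set vert n}})
  (hF : F \subset Qedges n) (hB : B \subset Qedges n :\: F)
  (hBham : forall c, HamCycle F c -> B \subset cycle_edges c)
  (i : 'I_n) :
  let fe := #|F :&: even_cross i| in
  let fo := #|F :&: odd_cross i| in
  let be := #|B :&: even_cross i| in
  let bo := #|B :&: odd_cross i| in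
  [/\ (fe = 2 ^ (n - 2) \/ fo = 2 ^ (n - 2)) -> ~ hamiltonian F,
      (fe + bo > 2 ^ (n - 2) \/ fo + be > 2 ^ (n - 2)) -> ~ hamiltonian F,
      fe + bo = 2 ^ (n - 2) ->
        (forall c, HamCycle F c -> even_cross i :\: F \subset cycle_edges c) /\
        (forall e, e \in odd_cross i ->
           (exists c, HamCycle F c /\ e \in cycle_edges c) -> e \in B),
      fo + be = 2 ^ (n - 2) ->
        (forall c, HamCycle F c -> odd_cross i :\: F \subset cycle_edges c) /\
        (forall e, e \in even_cross i ->
           (exists c, HamCycle F c /\ e \in cycle_edges c) -> e \in B)
    & (fe = 2 ^ (n - 2) - 1 ->
         forall e, e \in even_cross i :\: F ->
           forall c, HamCycle F c -> e \in cycle_edges c) /\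
      (fo = 2 ^ (n - 2) - 1 ->
         forall e, e \in odd_cross i :\: F ->
           forall c, HamCycle F c -> e \in cycle_edges c)].
Proof.
have n_gt1 : 1 < n := ltnW hn.
rewrite /= even_cross_edges odd_cross_edges.
split.
- by case; apply: no_ham_full.
- by case; apply: (no_ham_overfull n_gt1 hBham).
- exact: (tight_cross_edges n_gt1 hBham (p := false)).
- exact: (tight_cross_edges n_gt1 hBham (p := true)).
- by split; apply: almost_full.
Qed.
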